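(* Let $G$ be a finite $p$-group for some prime $p$. Then the poset $\overline{C}(G)$ of conjugacy classes of cyclic subgroups of $G$ possesses a breaking point if and only if $G$ is either a cyclic $p$-group of order at least $p^2$, or a generalized quaternion $2$-group $Q_{2^n}$ for some $n\geq 3$.
   Context: For a finite group $G$, let $\overline{C}(G)=\{[H]\mid H \text{ a cyclic subgroup of } G\}$, where $[H]$ is the conjugacy class of $H$, partially ordered by $[H_1]\leq[H_2]$ if and only if $H_1\subseteq H_2^g$ for some $g\in G$. A breaking point of $\overline{C}(G)$ is a class $[H]$ with $H\neq 1$ and $H\neq G$ such that for every $[X]\in\overline{C}(G)$ we have $[X]\leq[H]$ or $[H]\leq[X]$. For $n\geq 3$, the generalized quaternion $2$-group is $Q_{2^n}=\langle a,b \mid a^{2^{n-2}}=b^2,\ a^{2^{n-1}}=1,\ b^{-1}ab=a^{-1}\rangle$, of order $2^n$. *)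

From HB Require Import structures.
From mathcomp Require Import all_boot all_order all_fingroup all_solvable.
Set Implicit Arguments. Unset Strict Implicit. Unset Printing Implicit Defensive.
Local Open Scope group_scope.

(* [X] <= [H] in the poset of conjugacy classes of cyclic subgroups of G:
   X is contained in some G-conjugate of H. *)
Definition cclass_le (gT : finGroupType) (G X H : {set gT}) : bool :=
  [exists g in G, X \subset H :^ g].

(* [H] is a breaking point of \overline{C}(G); the class is represented by
   a cyclic subgroup H of G (the definition is conjugation invariant). *)
Definition breaking_point (gT : finGroupType) (G H : {group gT}) : bool :=
  [&& H \subset G, cyclic H, H != 1%G, H != G &
      [forall X : {group gT},
         (X \subset G) && cyclic X ==> cclass_le G X H || cclass_le G H X]].

Definition has_breaking_point (gT : finGroupType) (G : {group gT}) : bool :=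
  [exists H : {group gT}, breaking_point G H].

From HB Require Import structures.
From mathcomp Require Import all_boot all_order all_fingroup all_solvable.
Set Implicit Arguments.
Unset Strict Implicit.
Unset Printing Implicit Defensive.

Local Open Scope group_scope.

(* A breaking point H is comparable with every subgroup of prime order, and
   since H is cyclic and nontrivial this puts every subgroup of order p inside
   a conjugate of H.  Comparing with a central subgroup of order p, which is
   normal, shows that G has a unique subgroup of order p, i.e. |Ohm_1(G)| = p.
   Conversely, if |Ohm_1(G)| = p then Ohm_1(G) lies in every nontrivial
   subgroup, so it is a breaking point as soon as it is proper.  The p-groups
   with |Ohm_1(G)| = p are exactly the cyclic and generalized quaternion ones
   (prime_Ohm1P). *)

Section BreakingPoints.

Variable gT : finGroupType.
Implicit Types G H X A B : {group gT}.

Lemma Ohm1_prime_sub G X :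
  prime #|'Ohm_1(G)| -> X \subset G -> X :!=: 1 -> 'Ohm_1(G) \subset X.
Proof.
move=> prO sXG ntX; apply: subset_trans (Ohm_sub 1 X).
by apply: prime_meetG prO _; rewrite (setIidPr (OhmS 1 sXG)) Ohm1_eq1.
Qed.

Lemma pgroup_proper_dvdn (p : nat) G H :
  p.-group G -> H \proper G -> (p * #|H| %| #|G|)%N.
Proof.
move=> pG /andP[sHG not_sGH].
have [k oGH] := p_natP (pnat_dvd (dvdn_indexg G H) pG).
have : 1 < #|G : H| by rewrite indexg_gt1.
rewrite -(Lagrange sHG) oGH; case: k {oGH} => [//|k] _.
by rewrite expnS mulnCA mulnA dvdn_mulr.
Qed.

Lemma breaking_point_card (p : nat) G H :
  p.-group G -> breaking_point G H -> (p ^ 2 <= #|G|)%N.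
Proof.
move=> pG /and5P[sHG _ ntH neHG _].
have [_ p_dvd_H _] := pgroup_pdiv (pgroupS sHG pG) ntH.
have ltHG : H \proper G by rewrite properEneq neHG.
apply: leq_trans _ (dvdn_leq (cardG_gt0 G) (pgroup_proper_dvdn pG ltHG)).
by rewrite expnS expn1 leq_mul2l dvdn_leq ?orbT.
Qed.

Lemma breaking_point_prime_le G H X :
  breaking_point G H -> X \subset G -> prime #|X| -> cclass_le G X H.
Proof.
case/and5P=> _ _ ntH _ /forallP/(_ X) + sXG prX.
rewrite sXG prime_cyclic //= => /orP[// | /existsP[g /andP[Gg sHXg]]].
apply/existsP; exists g^-1; rewrite groupV Gg /=.
apply: prime_meetG prX _.
by rewrite (setIidPr _) ?sub_conjgV ?invgK // conjsg_eq1.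
Qed.

Lemma breaking_point_prime_normal_eq G H A B :
  breaking_point G H -> A \subset G -> B <| G -> prime #|A| -> #|A| = #|B| ->
  A :=: B.
Proof.
move=> bpH sAG /andP[sBG /normsP nBG] prA oAB.
have [_ cycH _ _ _] := and5P bpH.
have /existsP[g /andP[Gg sAHg]] := breaking_point_prime_le bpH sAG prA.
have prB : prime #|B| by rewrite -oAB.
have /existsP[h /andP[Gh sBHh]] := breaking_point_prime_le bpH sBG prB.
have sBH : B \subset H by rewrite -(nBG _ (groupVr Gh)) sub_conjgV.
have defA : A :^ g^-1 = B.
  by apply/eqP; rewrite (eq_subG_cyclic cycH) ?cardJg ?oAB ?sub_conjgV.
by rewrite -(conjsgKV g A) defA nBG.
Qed.

Lemma breaking_point_Ohm1 (p : nat) G H :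
  p.-group G -> breaking_point G H -> #|'Ohm_1(G)| = p.
Proof.
move=> pG bpH; have [sHG _ ntH _ _] := and5P bpH.
have ntG : G :!=: 1.
  by apply: contraNneq ntH => G1; apply/eqP/trivGP; rewrite -G1.
have [p_pr _ _] := pgroup_pdiv pG ntG.
have ntZ : 'Z(G) :!=: 1 by rewrite (center_nil_eq1 (pgroup_nil pG)).
have [_ p_dvd_Z _] := pgroup_pdiv (pgroupS (center_sub G) pG) ntZ.
have [z Zz oz] := Cauchy p_pr p_dvd_Z.
have Gz : z \in G := subsetP (center_sub G) z Zz.
have nsZG : <[z]> <| G by rewrite sub_center_normal ?cycle_subG.
suff -> : 'Ohm_1(G) = <[z]> by [].
apply/eqP; rewrite eqEsubset (OhmE 1 pG) gen_subG cycle_subG.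
rewrite mem_gen ?inE ?Gz ?expn1 -?oz ?expg_order ?eqxx // andbT.
apply/subsetP=> x; rewrite !inE => /andP[Gx /eqP xp].
have [-> | ntx] := eqVneq x 1; first exact: group1.
have oxz : #[x] = #[z].
  have : #[x] %| #[z] by rewrite order_dvdn xp.
  rewrite oz; case/primeP: p_pr => _ /[apply] /orP[/eqP x1 | /eqP -> //].
  by move: ntx; rewrite -order_eq1 x1.
have prx : prime #|<[x]>| by rewrite [#|_|]oxz oz.
rewrite -cycle_subG (breaking_point_prime_normal_eq bpH _ nsZG prx oxz).
  by rewrite cycle_subG cycle_id.
by rewrite cycle_subG.
Qed.

Lemma Ohm1_breaking_point p G :
  prime p -> #|'Ohm_1(G)| = p -> (p ^ 2 <= #|G|)%N ->
  breaking_point G 'Ohm_1(G)%G.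
Proof.
move=> p_pr oO bigG; have prO : prime #|'Ohm_1(G)| by rewrite oO.
apply/and5P; split; [exact: Ohm_sub | exact: prime_cyclic | | |].
- by change ('Ohm_1(G) :!=: 1); rewrite -cardG_gt1 oO prime_gt1.
- apply: contraTneq bigG => defG; rewrite -defG oO -ltnNge.
  by rewrite -{1}(expn1 p) ltn_exp2l ?prime_gt1.
apply/forallP=> X; apply/implyP=> /andP[sXG _]; apply/orP.
have [-> | ntX] := eqVneq X 1%G; [left | right]; apply/existsP; exists 1;
  by rewrite group1 conjsg1 ?sub1G ?Ohm1_prime_sub.
Qed.

Lemma has_breaking_pointP (p : nat) G :
  prime p -> p.-group G ->
  has_breaking_point G <-> #|'Ohm_1(G)| = p /\ (p ^ 2 <= #|G|)%N.
Proof.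
move=> p_pr pG; split=> [/existsP[H bpH] | [oO bigG]].
  by split; [apply: breaking_point_Ohm1 bpH | apply: breaking_point_card bpH].
by apply/existsP; exists 'Ohm_1(G)%G; apply: Ohm1_breaking_point oO bigG.
Qed.

Lemma quaternion_pgroup_Ohm1 (p : nat) G n :
  p.-group G -> 2 < n -> G \isog 'Q_(2 ^ n) ->
  #|'Ohm_1(G)| = p /\ (p ^ 2 <= #|G|)%N.
Proof.
move=> pG n_gt2 isoG.
have oG : #|G| = (2 ^ n)%N by rewrite (card_isog isoG) card_quaternion.
have ntG : G :!=: 1.
  by rewrite -cardG_gt1 oG -(expn0 2) ltn_exp2l // (ltn_trans _ n_gt2).
have [p_pr _ [m oGp]] := pgroup_pdiv pG ntG.
have p2 : p = 2.
  by rewrite -(pdiv_pfactor m p_pr) -oGp oG -(ltn_predK n_gt2) pdiv_pfactor.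
split; last by rewrite oG p2 leq_exp2l // ltnW.
apply/(prime_Ohm1P pG ntG); rewrite p2 eqxx /=; apply/orP; right.
by apply/eqP/quaternion_classP; exists n.
Qed.

End BreakingPoints.

Theorem mainTheorem5 (gT : finGroupType) (G : {group gT}) (p : nat) :
  prime p -> p.-group G ->
  (has_breaking_point G <->
   (cyclic G /\ (p ^ 2 <= #|G|)%N) \/
   (exists n : nat, (3 <= n)%N /\ G \isog [set: gsort 'Q_(2 ^ n)])).
Proof.
move=> p_pr pG; apply: iff_trans (has_breaking_pointP p_pr pG) _.
have ntG_big : (p ^ 2 <= #|G|)%N -> G :!=: 1.
  move=> bigG; rewrite -cardG_gt1 (leq_trans _ bigG) //.
  by rewrite -(expn0 p) ltn_exp2l ?prime_gt1.
split=> [[oO bigG] | [[cycG bigG] | [n [n_gt2 isoG]]]].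
- have ntG := ntG_big bigG.
  case/orP: (introT (prime_Ohm1P pG ntG) oO) => [cycG | /andP[_ /eqP]].
    by left; split.
  by case/quaternion_classP=> n n_gt2 isoG; right; exists n.
- by split=> //; apply: Ohm1_cyclic_pgroup_prime cycG pG (ntG_big bigG).
- exact: quaternion_pgroup_Ohm1 pG n_gt2 isoG.
Qed.
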